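(* Let $B$ be a skew left brace with associated solution $r_B(a,b)=(\lambda_a(b),\lambda_a(b)^{-1}ab)$, and let $I$ be a proper ideal of $B$ such that $B/I$ is an abelian brace. Let $\mathcal P$ be the set of all left cosets $bI$ ($b\in B$) of $I$ in $B$. Then $(B,r_B)$ is uniformly $\mathcal P$-decomposable, i.e. $r_B(bI\times b'I)=b'I\times bI$ for all $b,b'\in B$. In particular, if $B$ is finite and $|B:I|=n$, then $(B,r_B)$ is uniformly $n$-decomposable.
   Context: A skew left brace (brace) is a set $B$ with two group structures $(B,+)$ and $(B,\cdot)$ with $a(b+c)=ab-a+ac$; $\lambda_a(b)=-a+ab$. An ideal is a subset that is a normal subgroup of both groups and $\lambda_b$-invariant for all $b$ (so its left cosets with respect to $\cdot$ and $+$ coincide). A brace is abelian if $xy=x+y=y+x$ for all elements. A partition is uniform if all blocks have the same cardinality. For a partition $\mathcal P=\{X_i\}$ of $X$, a solution $(X,r)$ is uniformly $\mathcal P$-decomposable if $\mathcal P$ is uniform and $r(X_i\times X_j)=X_j\times X_i$ for all $i,j$; it is uniformly $n$-decomposable if this holds for some uniform partition into $n\ge2$ blocks. *)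

From mathcomp Require Import all_boot.
From mathcomp Require Import boolp classical_sets cardinality.
Set Implicit Arguments. Unset Strict Implicit. Unset Printing Implicit Defensive.
Local Open Scope classical_set_scope.

Record skew_brace (T : Type) := SkewBrace {
  sb_add : T -> T -> T;  sb_opp : T -> T;  sb_zero : T;
  sb_mul : T -> T -> T;  sb_inv : T -> T;  sb_one : T;
  sb_addA : forall a b c, sb_add a (sb_add b c) = sb_add (sb_add a b) c;
  sb_add0r : forall a, sb_add sb_zero a = a;
  sb_addr0 : forall a, sb_add a sb_zero = a;
  sb_addNr : forall a, sb_add (sb_opp a) a = sb_zero;
  sb_addrN : forall a, sb_add a (sb_opp a) = sb_zero;
  sb_mulA : forall a b c, sb_mul a (sb_mul b c) = sb_mul (sb_mul a b) c;
  sb_mul1r : forall a, sb_mul sb_one a = a;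
  sb_mulr1 : forall a, sb_mul a sb_one = a;
  sb_mulVr : forall a, sb_mul (sb_inv a) a = sb_one;
  sb_mulrV : forall a, sb_mul a (sb_inv a) = sb_one;
  sb_brace : forall a b c,
    sb_mul a (sb_add b c) = sb_add (sb_add (sb_mul a b) (sb_opp a)) (sb_mul a c)
}.

Section Brace.
Variables (T : Type) (B : skew_brace T).
Local Notation "a + b" := (sb_add B a b).
Local Notation "- a" := (sb_opp B a).
Local Notation "a * b" := (sb_mul B a b).
Local Notation "a ^-1" := (sb_inv B a).

Definition lambda (a b : T) : T := - a + a * b.

Definition r_B (p : T * T) : T * T :=
  let a := p.1 in let b := p.2 in (lambda a b, (lambda a b)^-1 * (a * b)).

Definition is_ideal (I : set T) : Prop :=
  [/\ I (sb_zero B),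
      (forall x y, I x -> I y -> I (x + y)),
      (forall x, I x -> I (- x)),
      (forall a x, I x -> I (a + x + - a)) &
      [/\ I (sb_one B),
          (forall x y, I x -> I y -> I (x * y)),
          (forall x, I x -> I (x ^-1)),
          (forall a x, I x -> I (a * x * a ^-1)) &
          (forall b x, I x -> I (lambda b x))]].

Definition proper_ideal (I : set T) : Prop := is_ideal I /\ I != setT.

(* left coset bI (with respect to the multiplicative group; for an ideal it
   coincides with the additive coset b + I) *)
Definition lcoset (I : set T) (b : T) : set T := [set b * x | x in I].

Definition cosets (I : set T) : set (set T) := [set lcoset I b | b in [set: T]].

(* B/I is an abelian brace: (xI)(yI) = (xI)+(yI) = (yI)+(xI), where the
   quotient operations are (xI)(yI) = (xy)I and xI + yI = (x+y)I. *)
Definition abelian_quotient (I : set T) : Prop :=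
  forall x y, lcoset I (x * y) = lcoset I (x + y) /\
              lcoset I (x + y) = lcoset I (y + x).
End Brace.

Definition is_partition (X : Type) (P : set (set X)) : Prop :=
  [/\ (forall A, P A -> A !=set0),
      (forall A A', P A -> P A' -> A `&` A' !=set0 -> A = A') &
      (forall x, exists2 A, P A & A x)].

Definition uniform_partition (X : Type) (P : set (set X)) : Prop :=
  is_partition P /\ (forall A A', P A -> P A' -> (A #= A')%card).

Definition uniformly_P_decomposable (X : Type) (r : X * X -> X * X)
    (P : set (set X)) : Prop :=
  uniform_partition P /\
  (forall Xi Xj, P Xi -> P Xj -> r @` (Xi `*` Xj) = Xj `*` Xi).

Definition uniformly_n_decomposable (X : Type) (r : X * X -> X * X)
    (n : nat) : Prop :=
  (2 <= n)%N /\
  exists P : set (set X), (P #= `I_n)%card /\ uniformly_P_decomposable r P.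

From mathcomp Require Import all_boot zify.
From mathcomp Require Import boolp classical_sets cardinality.
From Stdlib Require Import Setoid Morphisms.
Local Open Scope classical_set_scope.
Set Implicit Arguments. Unset Strict Implicit.

(* Let I be an ideal of the skew brace B and write x ~ y when x^-1 y lies in I.
   Because I is a normal subgroup of both groups and lambda-invariant, ~ is a
   congruence for +, -, . and ^-1, and x ~ y is equivalent to -x + y in I; the
   left coset bI is exactly the ~-class of b.  If B/I is abelian then
   xy ~ x + y ~ y + x, hence lambda_a(b) = -a + ab ~ b and
   lambda_a(b)^-1 ab ~ b^-1 ab ~ a, so r_B maps aI x bI into bI x aI; the
   converse inclusion is witnessed by the preimage (uv - u, (uv - u)^-1 uv)
   of (u, v).  The cosets partition B, and each coset bI is in bijection with
   I (left multiplication by b), so the partition is uniform. *)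

Lemma two_le_card_II (X : Type) (P : set (set X)) (A A' : set X) (n : nat) :
  P A -> P A' -> A <> A' -> (P #= `I_n)%card -> (2 <= n)%N.
Proof.
move=> PA PA' AA' /card_set_bijP[f [fP finj _]].
have fA : (f A < n)%N := fP _ PA.
have fA' : (f A' < n)%N := fP _ PA'.
have ffA : f A <> f A' by move=> e; apply: AA'; apply: finj; rewrite ?inE.
lia.
Qed.

Section SkewBrace.
Variables (T : Type) (B : skew_brace T).
Local Notation "a + b" := (sb_add B a b).
Local Notation "- a" := (sb_opp B a).
Local Notation "a * b" := (sb_mul B a b).
Local Notation "a ^-1" := (sb_inv B a).
Local Notation "0" := (sb_zero B).
Local Notation "1" := (sb_one B).

Lemma addKr a b : - a + (a + b) = b.
Proof. by rewrite sb_addA sb_addNr sb_add0r. Qed.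
Lemma addNKr a b : a + (- a + b) = b.
Proof. by rewrite sb_addA sb_addrN sb_add0r. Qed.
Lemma addrK a b : a + b + - b = a.
Proof. by rewrite -sb_addA sb_addrN sb_addr0. Qed.
Lemma addrNK a b : a + - b + b = a.
Proof. by rewrite -sb_addA sb_addNr sb_addr0. Qed.
Lemma oppU a b : a + b = 0 -> - a = b.
Proof. by move=> h; rewrite -[RHS](addKr a) h sb_addr0. Qed.
Lemma oppK a : - - a = a.
Proof. by apply: oppU; rewrite sb_addNr. Qed.
Lemma oppD a b : - (a + b) = - b + - a.
Proof.
by apply: oppU; rewrite -sb_addA (sb_addA _ b) sb_addrN sb_add0r sb_addrN.
Qed.

Lemma mulKr a b : a^-1 * (a * b) = b.
Proof. by rewrite sb_mulA sb_mulVr sb_mul1r. Qed.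
Lemma mulVKr a b : a * (a^-1 * b) = b.
Proof. by rewrite sb_mulA sb_mulrV sb_mul1r. Qed.
Lemma invU a b : a * b = 1 -> a^-1 = b.
Proof. by move=> h; rewrite -[RHS](mulKr a) h sb_mulr1. Qed.
Lemma invK a : (a^-1)^-1 = a.
Proof. by apply: invU; rewrite sb_mulVr. Qed.
Lemma invM a b : (a * b)^-1 = b^-1 * a^-1.
Proof.
by apply: invU; rewrite -sb_mulA (sb_mulA _ b) sb_mulrV sb_mul1r sb_mulrV.
Qed.
Lemma inv1 : 1^-1 = 1.
Proof. by apply: invU; rewrite sb_mul1r. Qed.

(* In a skew brace both groups share their neutral element: take a = 1,
   b = c = 0 in the brace axiom. *)
Lemma zero_one : 0 = 1.
Proof.
have := sb_brace B 1 0 0; rewrite !sb_mul1r !sb_addr0 sb_add0r => h.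
have opp0 : - 0 = 0 by apply: oppU; rewrite sb_addr0.
by rewrite -[1]oppK -h opp0.
Qed.

Section IdealCongruence.
Variable I : set T.
Hypothesis idealI : is_ideal B I.

Lemma ideal1 : I (sb_one B).
Proof. by case: idealI => _ _ _ _ []. Qed.
Lemma idealDJ a x : I x -> I (a + x + - a).
Proof. by case: idealI => _ _ _ h _; apply: h. Qed.
Lemma idealM x y : I x -> I y -> I (x * y).
Proof. by case: idealI => _ _ _ _ [_ h _ _ _]; apply: h. Qed.
Lemma idealV x : I x -> I (x^-1).
Proof. by case: idealI => _ _ _ _ [_ _ h _ _]; apply: h. Qed.
Lemma idealMJ a x : I x -> I (a * x * a^-1).
Proof. by case: idealI => _ _ _ _ [_ _ _ h _]; apply: h. Qed.
Lemma ideal_lambda b x : I x -> I (lambda B b x).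
Proof. by case: idealI => _ _ _ _ [_ _ _ _ h]; apply: h. Qed.

Definition congr_mod (x y : T) : Prop := I (x^-1 * y).

(* The additive description of the same relation: lambda_x carries
   x^-1 y to -x + y and back, and I is lambda-invariant. *)
Lemma congr_modE x y : congr_mod x y <-> I (- x + y).
Proof.
split=> h.
- have -> : - x + y = lambda B x (x^-1 * y) by rewrite /lambda mulVKr.
  exact: ideal_lambda.
- rewrite /congr_mod -[y](addNKr x) sb_brace sb_mulVr -zero_one sb_add0r.
  exact: ideal_lambda.
Qed.

Global Instance congr_mod_equiv : Equivalence congr_mod.
Proof.
split.
- by move=> x; rewrite /congr_mod sb_mulVr; exact: ideal1.
- by move=> x y h; rewrite /congr_mod -[x]invK -invM; exact: idealV.
- move=> x y z h1 h2; rewrite /congr_mod -(mulVKr y z) sb_mulA.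
  exact: idealM.
Qed.

(* Compatibility with products, inverses and sums: normality in (B,.) and
   in (B,+) respectively. *)
Global Instance mul_congr :
  Proper (congr_mod ==> congr_mod ==> congr_mod) (sb_mul B).
Proof.
move=> x x' hx y y' hy; transitivity (x * y').
- by rewrite /congr_mod invM -sb_mulA mulKr.
- rewrite /congr_mod invM -sb_mulA.
  by have := idealMJ (y'^-1) hx; rewrite invK !sb_mulA.
Qed.

Global Instance inv_congr : Proper (congr_mod ==> congr_mod) (sb_inv B).
Proof.
move=> x y h; rewrite /congr_mod invK.
by have := idealMJ x (idealV h); rewrite invM invK -!sb_mulA sb_mulrV sb_mulr1.
Qed.

Global Instance add_congr :
  Proper (congr_mod ==> congr_mod ==> congr_mod) (sb_add B).
Proof.
move=> x x' hx y y' hy; transitivity (x + y'); apply/congr_modE.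
- by rewrite oppD -sb_addA addKr; apply/congr_modE.
- rewrite !oppD; move/congr_modE: hx => /(idealDJ (- y')).
  by rewrite oppK !sb_addA.
Qed.

Lemma lcosetP b y : lcoset B I b y <-> congr_mod b y.
Proof.
split; first by case=> x Ix <-; rewrite /congr_mod mulKr.
by move=> h; exists (b^-1 * y) => //; rewrite mulVKr.
Qed.

Lemma lcoset_refl b : lcoset B I b b.
Proof. by apply/lcosetP; reflexivity. Qed.

Lemma cosets_partition : is_partition (cosets B I).
Proof.
split.
- by move=> _ [b _ <-]; exists b; exact: lcoset_refl.
- move=> _ _ [b _ <-] [b' _ <-] [z [/lcosetP bz /lcosetP b'z]].
  have bb' : congr_mod b b' by transitivity z; last symmetry.
  by apply/seteqP; split=> y /lcosetP hy; apply/lcosetP; rewrite ?bb' // -bb'.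
- by move=> x; exists (lcoset B I x); [exists x | exact: lcoset_refl].
Qed.

Lemma proper_ideal_two_cosets :
  I != setT -> exists t, lcoset B I (sb_one B) <> lcoset B I t.
Proof.
move=> IneT; have [t It] : exists t, ~ I t.
  apply/existsNP => hall; move/eqP: IneT; apply.
  by apply/seteqP; split=> x //= _; apply: hall.
exists t => e; apply: It.
have : lcoset B I (sb_one B) t by rewrite e; exact: lcoset_refl.
by move=> /lcosetP; rewrite /congr_mod inv1 sb_mul1r.
Qed.

Hypothesis abelianBI : abelian_quotient B I.

Lemma congr_mul_add x y : congr_mod (x * y) (x + y).
Proof.
by have [e _] := abelianBI x y; apply/lcosetP; rewrite e; exact: lcoset_refl.
Qed.

Lemma congr_addC x y : congr_mod (x + y) (y + x).
Proof.
by have [_ e] := abelianBI x y; apply/lcosetP; rewrite e; exact: lcoset_refl.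
Qed.

Lemma congr_mulC x y : congr_mod (x * y) (y * x).
Proof. by rewrite congr_mul_add congr_addC -congr_mul_add; reflexivity. Qed.

(* lambda_a(b) = -a + ab ~ -a + (a + b) = b. *)
Lemma congr_lambda a b : congr_mod (lambda B a b) b.
Proof. by rewrite /lambda congr_mul_add addKr; reflexivity. Qed.

Lemma r_B_lcoset b b' :
  r_B B @` (lcoset B I b `*` lcoset B I b') = lcoset B I b' `*` lcoset B I b.
Proof.
apply/seteqP; split.
- move=> _ [[a c] [/= /lcosetP ba /lcosetP b'c] <-].
  split=> /=; apply/lcosetP; first by rewrite congr_lambda.
  by rewrite congr_lambda (congr_mulC a c) mulKr.
- move=> [u v] [/= /lcosetP b'u /lcosetP bv].
  have preim1 : congr_mod (u * v + - u) v.
    by rewrite congr_mul_add (congr_addC u v) addrK; reflexivity.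
  exists (u * v + - u, (u * v + - u)^-1 * (u * v)).
    split; apply/lcosetP => /=; first by rewrite preim1.
    by rewrite preim1 (congr_mulC u v) mulKr.
  by rewrite /r_B /lambda /= mulVKr oppD oppK addrNK mulKr.
Qed.

End IdealCongruence.

End SkewBrace.

(* Every left coset bI is in bijection with I, via left multiplication by b;
   no ideal property is needed. *)
Lemma lcoset_card (T : Type) (B : skew_brace T) (I : set T) (b : T) :
  (lcoset B I b #= I)%card.
Proof.
apply: inj_card_eq => x y _ _ e.
by rewrite -(mulKr B b x) e mulKr.
Qed.

Lemma cosets_uniform (T : Type) (B : skew_brace T) (I : set T) :
  is_ideal B I -> uniform_partition (cosets B I).
Proof.
move=> idealI; split; first exact: cosets_partition.
move=> _ _ [b _ <-] [b' _ <-].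
by apply: card_eq_trans (lcoset_card B I b) _; rewrite card_eq_sym lcoset_card.
Qed.

Theorem corollary4p15 (T : Type) (B : skew_brace T) (I : set T) :
  proper_ideal B I -> abelian_quotient B I ->
  uniformly_P_decomposable (r_B B) (cosets B I) /\
  (forall n : nat, finite_set [set: T] -> (cosets B I #= `I_n)%card ->
     uniformly_n_decomposable (r_B B) n).
Proof.
move=> [idealI IneT] abelianBI.
have decomp : uniformly_P_decomposable (r_B B) (cosets B I).
  split; first exact: cosets_uniform.
  by move=> _ _ [b _ <-] [b' _ <-]; apply: r_B_lcoset.
split=> // n _ index_n; split; last by exists (cosets B I).
have [t neq] := proper_ideal_two_cosets idealI IneT.
by apply: two_le_card_II index_n; [exists (sb_one B) | exists t |].
Qed.
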